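(* Let $n\ge0$ and run the Tiden–Arnborg algorithm on $\sigma(n)$, performing sum transformations level by level. At each level $k<n+3$, the sum transformation is applied $2^k-1$ times.
   Context: Variables are $T$, $x_s$, $y_s$ with $s$ a string over $\{1,2\}$ ($x=x_\varepsilon$, $y=y_\varepsilon$); the level of $x_s$ or $y_s$ is $|s|+1$, and a sum transformation is said to be at level $k$ if it is applied at a peak of level $k$. For $n\ge0$, $\sigma(n)$ consists of, for all $0\le i\le n$: $x_{1^i}=^?x_{1^{i+1}}+x_{1^i2}$, $y_{2^i}=^?y_{2^i1}+y_{2^{i+1}}$, $y_{2^i1}=^?T\times x_{1^i2}$, $x=^?T\times y$, $x_{1^{i+1}}=^?x_{1^{i+2}}+x_{1^{i+1}2}$; its variables occupy levels $1,\dots,n+3$. A variable $U_i$ ($U\in\{x,y\}$) is a peak if the system contains both $U_i=^?U_{i1}+U_{i2}$ and $U_i=^?T\times W_j$. A sum transformation at a peak $U_i$ replaces $U_i=^?U_{i1}+U_{i2}$ by $W_j=^?W_{j1}+W_{j2}$, $U_{i1}=^?T\times W_{j1}$, $U_{i2}=^?T\times W_{j2}$ (keeping $U_i=^?T\times W_j$), with $W_{j1},W_{j2}$ identified with the existing children of $W_j$ if $W_j$ already has a sum equation. The Tiden–Arnborg algorithm (for $x\times(y+z)=x\times y+x\times z$) applies sum transformations as long as possible, completing all those at one level before the next. *)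

From Stdlib Require Import List Arith.
Import ListNotations.

Inductive digit := d1 | d2.

(* the two families of variables x_s and y_s (T is a fixed constant) *)
Inductive letter := Lx | Ly.

(* A variable U_s is a pair (letter, string); its level is |s|+1. *)
Definition level (s : list digit) : nat := length s + 1.

(* Equations:
   ESum u s        stands for   U_s =? U_{s1} + U_{s2}
   EProd u s w j   stands for   U_s =? T x W_j                              *)
Inductive eqn :=
  | ESum  (u : letter) (s : list digit)
  | EProd (u : letter) (s : list digit) (w : letter) (j : list digit).

Definition system := eqn -> Prop.

Definition ones (i : nat) : list digit := repeat d1 i.
Definition twos (i : nat) : list digit := repeat d2 i.

Definition sigma (n : nat) : system := fun e =>
  exists i, i <= n /\
    (e = ESum Lx (ones i) \/
     e = ESum Ly (twos i) \/
     e = EProd Ly (twos i ++ [d1]) Lx (ones i ++ [d2]) \/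
     e = EProd Lx [] Ly [] \/
     e = ESum Lx (ones (S i))).

Definition peak_at (k : nat) (E : system) (u : letter) (s : list digit)
    (w : letter) (j : list digit) : Prop :=
  E (ESum u s) /\ E (EProd u s w j) /\ level s = k.

Definition no_peak (k : nat) (E : system) : Prop :=
  ~ exists u s w j, peak_at k E u s w j.

(* Sum transformation at the peak U_s (with U_s = T x W_j): remove
   U_s = U_{s1}+U_{s2}, add W_j = W_{j1}+W_{j2} (identified with the existing
   one if present, sets have no duplicates), U_{s1} = T x W_{j1},
   U_{s2} = T x W_{j2}; U_s = T x W_j is kept. *)
Definition sum_transform (E : system) (u : letter) (s : list digit)
    (w : letter) (j : list digit) : system := fun e =>
  (E e /\ e <> ESum u s) \/
  e = ESum w j \/
  e = EProd u (s ++ [d1]) w (j ++ [d1]) \/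
  e = EProd u (s ++ [d2]) w (j ++ [d2]).

Inductive steps (k : nat) (E : system) : nat -> system -> Prop :=
  | steps0 : steps k E 0 E
  | stepsS : forall m E' u s w j,
      steps k E m E' -> peak_at k E' u s w j ->
      steps k E (S m) (sum_transform E' u s w j).

Inductive levels_done (n : nat) : nat -> system -> Prop :=
  | done0 : levels_done n 0 (sigma n)
  | doneS : forall k E m E',
      levels_done n k E -> steps (S k) E m E' -> no_peak (S k) E' ->
      levels_done n (S k) E'.

From Stdlib Require Import List Arith Lia.
Import ListNotations.

(* At level K+1 the product equations pair every variable of that level with
   a successor: x_s = T x y_s, and y_s = T x x_{s'} where s' is s decremented
   as a binary number.  A sum transformation moves a sum equation of level
   K+1 from a peak to its successor.  Only the sum of x_{1^K} starts at a
   peak, so it walks through all 2^(K+1) variables of the level, largest number first,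
   and stops at y_{2^K}, which has no product equation: exactly 2^(K+1) - 1
   transformations.  The new product equations are the same pattern one level
   deeper, so the shape of the system is an invariant of the completed
   levels. *)

(* [d1] is the bit 1 and [d2] the bit 0, least significant digit first. *)
Fixpoint bin_val (s : list digit) : nat :=
  match s with
  | [] => 0
  | d1 :: t => 1 + 2 * bin_val t
  | d2 :: t => 2 * bin_val t
  end.

Fixpoint decr (s : list digit) : list digit :=
  match s with
  | [] => []
  | d1 :: t => d2 :: t
  | d2 :: t => d1 :: decr t
  end.

Lemma ones_length i : length (ones i) = i.
Proof. apply repeat_length. Qed.

Lemma twos_length i : length (twos i) = i.
Proof. apply repeat_length. Qed.

Lemma length_decr s : length (decr s) = length s.
Proof. induction s as [|[] t IH]; simpl; auto. Qed.

Lemma bin_val_decr s : 1 <= bin_val s -> bin_val (decr s) = bin_val s - 1.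
Proof. induction s as [|[] t IH]; simpl; intros; try lia; rewrite IH; lia. Qed.

Lemma bin_val_ones K : bin_val (ones K) = 2 ^ K - 1.
Proof.
  induction K as [|K IH]; simpl; auto.
  unfold ones in IH; rewrite IH. pose proof (Nat.pow_nonzero 2 K). lia.
Qed.

Lemma bin_val_twos K : bin_val (twos K) = 0.
Proof. induction K as [|K IH]; simpl; auto. unfold twos in IH; rewrite IH; lia. Qed.

Lemma bin_val_lt s : bin_val s < 2 ^ length s.
Proof. induction s as [|[] t IH]; simpl; lia. Qed.

Lemma bin_val_inj s s' : length s = length s' -> bin_val s = bin_val s' -> s = s'.
Proof.
  revert s'; induction s as [|a t IH]; intros [|b t'] Hl Hv; simpl in *;
    try discriminate; auto.
  destruct a, b; simpl in Hv; try lia; f_equal; apply IH; lia.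
Qed.

Lemma twos_or_twos_d1 s : s = twos (length s) \/ exists a t, s = twos a ++ d1 :: t.
Proof.
  induction s as [|[] t IH].
  - left; reflexivity.
  - right; exists 0, t; reflexivity.
  - destruct IH as [IH|[a [t' IH]]].
    + left; simpl; rewrite IH at 1; reflexivity.
    + right; exists (S a), t'; rewrite IH; reflexivity.
Qed.

Lemma decr_twos_d1 a t : decr (twos a ++ d1 :: t) = ones a ++ d2 :: t.
Proof. induction a as [|a IH]; simpl; [reflexivity | unfold twos, ones in *; now rewrite IH]. Qed.

Lemma twos_neq_twos_d1 K a t : twos K <> twos a ++ d1 :: t.
Proof.
  intro H. assert (Hin : In d1 (twos K)) by (rewrite H; apply in_or_app; simpl; auto).
  apply repeat_spec in Hin. discriminate.
Qed.

(* The partner W_j of the product equation U_s = T x W_j at the deepest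
   completed level. *)
Definition next_var (v : letter * list digit) : letter * list digit :=
  match v with
  | (Lx, s) => (Ly, s)
  | (Ly, s) => (Lx, decr s)
  end.

Fixpoint chain (K i : nat) : letter * list digit :=
  match i with
  | 0 => (Lx, ones K)
  | S i => next_var (chain K i)
  end.

Lemma length_chain K i : length (snd (chain K i)) = K.
Proof.
  induction i as [|i IH]; simpl; [apply ones_length|].
  destruct (chain K i) as [[] s]; simpl in *; rewrite ?length_decr; auto.
Qed.

Lemma chain_pair K q : q < 2 ^ K ->
  exists s, length s = K /\ bin_val s = 2 ^ K - 1 - q /\
    chain K (2 * q) = (Lx, s) /\ chain K (S (2 * q)) = (Ly, s).
Proof.
  induction q as [|q IH]; intros Hq.
  - exists (ones K). rewrite ones_length, bin_val_ones. repeat split; auto; lia.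
  - destruct IH as [s [Hl [Hv [_ Hy]]]]; [lia|].
    exists (decr s). rewrite length_decr, bin_val_decr by lia.
    replace (2 * S q) with (S (S (2 * q))) by lia.
    simpl in Hy |- *. rewrite Hy. repeat split; lia.
Qed.

Lemma chain_last K : chain K (2 ^ S K - 1) = (Ly, twos K).
Proof.
  pose proof (Nat.pow_nonzero 2 K).
  destruct (chain_pair K (2 ^ K - 1)) as [s [Hl [Hv [_ Hy]]]]; [lia|].
  replace (2 ^ S K - 1) with (S (2 * (2 ^ K - 1))) by (simpl; lia).
  rewrite Hy. f_equal. apply bin_val_inj; rewrite ?twos_length, ?bin_val_twos; lia.
Qed.

(* Before the end of the chain each step is one of the two product equations
   of the completed system at length K. *)
Lemma chain_step K i : i < 2 ^ S K - 1 ->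
  (exists s, length s = K /\ chain K i = (Lx, s) /\ chain K (S i) = (Ly, s)) \/
  (exists a t, a + 1 + length t = K /\ chain K i = (Ly, twos a ++ d1 :: t) /\
      chain K (S i) = (Lx, ones a ++ d2 :: t)).
Proof.
  simpl; intros Hi.
  destruct (Nat.Even_or_Odd i) as [[q ->]|[q ->]].
  - left. destruct (chain_pair K q) as [s [Hl [_ Hs]]]; [lia|]. eauto.
  - right. destruct (chain_pair K q) as [s [Hl [Hv [_ Hy]]]]; [lia|].
    destruct (twos_or_twos_d1 s) as [Hs|[a [t Hs]]].
    + exfalso. rewrite Hs, bin_val_twos in Hv. lia.
    + exists a, t. replace (2 * q + 1) with (S (2 * q)) by lia.
      change (chain K (S (S (2 * q)))) with (next_var (chain K (S (2 * q)))).
      rewrite Hy, Hs; simpl. rewrite decr_twos_d1.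
      repeat split; rewrite <- Hl, Hs, length_app, twos_length; simpl; lia.
Qed.

Lemma chain_neq_last K i : i < 2 ^ S K - 1 -> chain K i <> (Ly, twos K).
Proof.
  intros Hi; destruct (chain_step K i Hi) as [[s [_ [-> _]]]|[a [t [_ [-> _]]]]];
    [discriminate|].
  intros [= Heq]. symmetry in Heq. now apply twos_neq_twos_d1 in Heq.
Qed.

Lemma chain_visits_x K s : length s = K ->
  exists i, i < 2 ^ S K - 1 /\ chain K i = (Lx, s) /\ chain K (S i) = (Ly, s).
Proof.
  intros Hl. pose proof (bin_val_lt s) as Hlt. rewrite Hl in Hlt.
  destruct (chain_pair K (2 ^ K - 1 - bin_val s)) as [s' [Hl' [Hv Hs']]]; [lia|].
  replace s' with s in Hs' by (apply bin_val_inj; lia).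
  exists (2 * (2 ^ K - 1 - bin_val s)). simpl. split; [lia | auto].
Qed.

Lemma chain_visits_y K s : length s = K -> s <> twos K ->
  exists i, i < 2 ^ S K - 1 /\ chain K i = (Ly, s).
Proof.
  intros Hl Hne. pose proof (bin_val_lt s) as Hlt. rewrite Hl in Hlt.
  assert (bin_val s <> 0).
  { intro Hv. apply Hne, bin_val_inj; rewrite ?twos_length, ?bin_val_twos; auto. }
  destruct (chain_pair K (2 ^ K - 1 - bin_val s)) as [s' [Hl' [Hv [_ Hs']]]]; [lia|].
  replace s' with s in Hs' by (apply bin_val_inj; lia).
  exists (S (2 * (2 ^ K - 1 - bin_val s))). simpl. split; [lia | auto].
Qed.

Definition same_system (E F : system) : Prop := forall e, E e <-> F e.

(* The system once levels 1..K are completed. *)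
Definition completed (n K : nat) (e : eqn) : Prop :=
  (exists i, i <= n /\ e = ESum Ly (twos i)) \/
  (exists i, K <= i <= n + 1 /\ e = ESum Lx (ones i)) \/
  (exists s, length s <= K /\ e = EProd Lx s Ly s) \/
  (exists a t, a <= n /\ (t = [] \/ a + 1 + length t <= K) /\
      e = EProd Ly (twos a ++ d1 :: t) Lx (ones a ++ d2 :: t)).

Definition sum_of_length (K : nat) (e : eqn) : Prop :=
  exists u s, length s = K /\ e = ESum u s.

(* The system after m transformations at level K+1.  The sum of y_{2^K} (if
   present) stays untouched: the travelling sum only reaches it at the end. *)
Definition partial (n K m : nat) (e : eqn) : Prop :=
  (completed n K e /\ ~ sum_of_length K e) \/
  e = ESum (fst (chain K m)) (snd (chain K m)) \/
  (K <= n /\ e = ESum Ly (twos K)) \/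
  (exists i d, i < m /\
     e = EProd (fst (chain K i)) (snd (chain K i) ++ [d])
               (fst (chain K (S i))) (snd (chain K (S i)) ++ [d])).

Lemma not_sum_of_length K u s : length s <> K -> ~ sum_of_length K (ESum u s).
Proof. intros Hl [u' [s' [Hl' [= _ ->]]]]. contradiction. Qed.

Lemma not_sum_of_length_prod K u s w j : ~ sum_of_length K (EProd u s w j).
Proof. intros [u' [s' [_ H]]]; discriminate. Qed.

Lemma sigma_completed n : same_system (sigma n) (completed n 0).
Proof.
  intro e; unfold sigma, completed; split.
  - intros [i [Hi [->|[->|[->|[->| ->]]]]]].
    + right; left; exists i; split; [lia | auto].
    + left; eauto.
    + do 3 right; exists i, []; auto.
    + right; right; left; exists []; simpl; auto.
    + right; left; exists (S i); split; [lia | auto].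
  - intros [[i [Hi ->]]|[[[|i] [Hi ->]]|[[s [Hs ->]]|[a [t [Ha [[->|Ht] ->]]]]]]].
    + exists i; auto.
    + exists 0; split; [lia | auto].
    + exists i; split; [lia | do 4 right; reflexivity].
    + destruct s; simpl in Hs; [|lia]. exists 0; split; [lia | do 3 right; left; auto].
    + exists a; auto.
    + lia.
Qed.

Lemma completed_partial0 n K : K <= n + 1 -> same_system (completed n K) (partial n K 0).
Proof.
  intros HK e; unfold partial; split.
  - intros HD; destruct HD as [[i [Hi ->]]|[[i [Hi ->]]|[[s [Hs ->]]|[a [t [Ha [Ht ->]]]]]]].
    + destruct (Nat.eq_dec i K) as [->|Hne]; [right; right; left; auto|].
      left; split; [left; eauto | apply not_sum_of_length; now rewrite twos_length].
    + destruct (Nat.eq_dec i K) as [->|Hne]; [right; left; reflexivity|].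
      left; split; [right; left; eauto | apply not_sum_of_length; now rewrite ones_length].
    + left; split; [right; right; left; eauto | apply not_sum_of_length_prod].
    + left; split; [do 3 right; eauto 10 | apply not_sum_of_length_prod].
  - intros [[HD _]|[->|[[Hn ->]|[i [d [Hi _]]]]]]; [auto | | | lia].
    + right; left; exists K; split; [lia | reflexivity].
    + left; eauto.
Qed.

Lemma partial_no_prod_last n K m w j : ~ partial n K m (EProd Ly (twos K) w j).
Proof.
  intros [[HD _]|[H|[[_ H]|[i [d [_ H]]]]]]; try discriminate.
  - destruct HD as [[? [_ H]]|[[? [_ H]]|[[? [_ H]]|[a [t [_ [_ [= H _ _]]]]]]]];
      try discriminate.
    now apply twos_neq_twos_d1 in H.
  - injection H as _ H _ _. apply (f_equal (@length digit)) in H.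
    rewrite length_app, length_chain, twos_length in H. simpl in H. lia.
Qed.

Lemma partial_prod_next_var n K m u s w j :
  partial n K m (EProd u s w j) -> length s = K -> (w, j) = next_var (u, s).
Proof.
  intros [[HD _]|[H|[[_ H]|[i [d [_ [= Hu Hs Hw Hj]]]]]]] Hl; try discriminate.
  - destruct HD as [[? [_ H]]|[[? [_ H]]|[[? [_ [= -> -> -> ->]]]|[a [t [_ [_ [= -> -> -> ->]]]]]]]];
      try discriminate; simpl; now rewrite ?decr_twos_d1.
  - subst s. rewrite length_app, length_chain in Hl. simpl in Hl. lia.
Qed.

Lemma peak_partial n K m E u s w j :
  same_system E (partial n K m) -> peak_at (S K) E u s w j ->
  chain K m <> (Ly, twos K) /\ (u, s) = chain K m /\ (w, j) = chain K (S m).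
Proof.
  intros HE [Hs [Hp Hl]]. unfold level in Hl.
  apply HE in Hs; apply HE in Hp.
  destruct Hs as [[_ Hns]|[[= -> ->]|[[_ [= -> ->]]|[i [d [_ H]]]]]]; try discriminate.
  - exfalso. apply Hns. exists u, s. split; [lia | auto].
  - rewrite <- surjective_pairing.
    assert (Hne : chain K m <> (Ly, twos K)).
    { intro Heq. rewrite Heq in Hp. now apply partial_no_prod_last in Hp. }
    apply partial_prod_next_var in Hp; [|apply length_chain].
    rewrite <- surjective_pairing in Hp. now rewrite Hp.
  - now apply partial_no_prod_last in Hp.
Qed.

Lemma sum_transform_partial n K m E : m < 2 ^ S K - 1 ->
  same_system E (partial n K m) ->
  same_system
    (sum_transform E (fst (chain K m)) (snd (chain K m))
                     (fst (chain K (S m))) (snd (chain K (S m))))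
    (partial n K (S m)).
Proof.
  intros Hm HE e; unfold sum_transform; rewrite (HE e); unfold partial; split.
  - intros [[HM Hne]|[He|[He|He]]].
    + destruct HM as [HM|[HM|[HM|[i [d [Hi HM]]]]]]; [left | contradiction | right; right; left |]; auto.
      do 3 right; exists i, d; split; [lia | auto].
    + right; left; auto.
    + do 3 right; exists m, d1; split; [lia | auto].
    + do 3 right; exists m, d2; split; [lia | auto].
  - intros [HM|[HM|[[HKn HM]|[i [d [Hi HM]]]]]].
    + left; split; [left; auto|].
      intros ->. apply (proj2 HM). exists (fst (chain K m)), (snd (chain K m)).
      split; [apply length_chain | auto].
    + right; left; auto.
    + left; split; [right; right; left; auto|].
      subst e; intros [= Hu Hs]. apply (chain_neq_last K m Hm).
      destruct (chain K m); simpl in *; subst; auto.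
    + destruct (Nat.eq_dec i m) as [->|Hne].
      * destruct d; [right; right; left | do 3 right]; auto.
      * left; split; [do 3 right; exists i, d; split; [lia | auto] | subst e; discriminate].
Qed.

Lemma steps_partial n K E m E' : K <= n + 1 ->
  same_system E (completed n K) -> steps (S K) E m E' ->
  m <= 2 ^ S K - 1 /\ same_system E' (partial n K m).
Proof.
  intros HK HE Hst. induction Hst as [|m E' u s w j Hst IH Hpk].
  - split; [lia|]. intro e. rewrite (HE e). apply completed_partial0; auto.
  - destruct IH as [Hm HE'].
    destruct (peak_partial _ _ _ _ _ _ _ _ HE' Hpk) as [Hne [Hus Hwj]].
    assert (Hlt : m < 2 ^ S K - 1).
    { destruct (Nat.eq_dec m (2 ^ S K - 1)) as [->|]; [|lia].
      exfalso. apply Hne, chain_last. }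
    split; [lia|].
    replace u with (fst (chain K m)) by now rewrite <- Hus.
    replace s with (snd (chain K m)) by now rewrite <- Hus.
    replace w with (fst (chain K (S m))) by now rewrite <- Hwj.
    replace j with (snd (chain K (S m))) by now rewrite <- Hwj.
    now apply sum_transform_partial.
Qed.

Lemma completed_chain_prod n K i : K <= n + 1 -> i < 2 ^ S K - 1 ->
  completed n K
    (EProd (fst (chain K i)) (snd (chain K i)) (fst (chain K (S i))) (snd (chain K (S i)))).
Proof.
  intros HK Hi.
  destruct (chain_step K i Hi) as [[s [Hl [-> ->]]]|[a [t [Hl [-> ->]]]]]; simpl.
  - right; right; left; exists s; split; [lia | auto].
  - do 3 right; exists a, t; repeat split; [lia | right; lia].
Qed.

Lemma no_peak_partial n K m E : K <= n + 1 -> m <= 2 ^ S K - 1 ->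
  same_system E (partial n K m) -> no_peak (S K) E -> m = 2 ^ S K - 1.
Proof.
  intros HK Hm HE Hnp. destruct (Nat.eq_dec m (2 ^ S K - 1)) as [|Hne]; auto.
  exfalso. apply Hnp.
  exists (fst (chain K m)), (snd (chain K m)), (fst (chain K (S m))), (snd (chain K (S m))).
  split; [|split].
  - apply HE. right; left; auto.
  - apply HE. left; split; [apply completed_chain_prod; lia | apply not_sum_of_length_prod].
  - unfold level. rewrite length_chain. lia.
Qed.

Lemma partial_end_in_completed n K e : K <= n ->
  partial n K (2 ^ S K - 1) e -> completed n (S K) e.
Proof.
  intros HK [[HD Hns]|[->|[[_ ->]|[i [d [Hi ->]]]]]].
  - destruct HD as [HD|[[i [Hi ->]]|[[s [Hs ->]]|[a [t [Ha [Ht ->]]]]]]]; [left; auto | | |].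
    + right; left; exists i; split; [|auto].
      destruct (Nat.eq_dec i K) as [->|]; [|lia].
      exfalso; apply Hns; exists Lx, (ones K); split; [apply ones_length | auto].
    + right; right; left; exists s; split; [lia | auto].
    + do 3 right; exists a, t; repeat split; auto; destruct Ht; [left | right; lia]; auto.
  - rewrite chain_last; simpl. left; eauto.
  - left; eauto.
  - destruct (chain_step K i Hi) as [[s [Hl [-> ->]]]|[a [t [Hl [-> ->]]]]]; simpl.
    + right; right; left; exists (s ++ [d]); rewrite length_app; simpl; split; [lia | auto].
    + do 3 right; exists a, (t ++ [d]); rewrite length_app, <- !app_assoc; simpl.
      repeat split; [lia | right; lia].
Qed.

(* An equation of the new completed system that is not already in the old one
   is a product whose left index has length K+1; its last digit was appended
   by the transformation at the chain element obtained by dropping it. *)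
Lemma completed_in_partial_end n K e : K <= n ->
  completed n (S K) e -> partial n K (2 ^ S K - 1) e.
Proof.
  intros HK [[i [Hi ->]]|[[i [Hi ->]]|[[s [Hs ->]]|[a [t [Ha [Ht ->]]]]]]].
  - destruct (Nat.eq_dec i K) as [->|Hne]; [right; right; left; auto|].
    left; split; [left; eauto | apply not_sum_of_length; now rewrite twos_length].
  - left; split; [right; left; exists i; split; [lia | auto]|].
    apply not_sum_of_length; rewrite ones_length; lia.
  - destruct (Nat.le_gt_cases (length s) K) as [Hle|Hgt].
    { left; split; [right; right; left; eauto | apply not_sum_of_length_prod]. }
    destruct s as [|d s0 _] using rev_ind; [simpl in Hgt; lia|].
    rewrite length_app in Hs, Hgt; simpl in Hs, Hgt.
    destruct (chain_visits_x K s0) as [i [Hi [Hx Hy]]]; [lia|].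
    do 3 right; exists i, d; rewrite Hx, Hy; auto.
  - induction t as [|d t0 _] using rev_ind.
    { left; split; [do 3 right; exists a, []; auto | apply not_sum_of_length_prod]. }
    destruct Ht as [Ht|Ht]; [destruct t0; discriminate|].
    rewrite length_app in Ht; simpl in Ht.
    destruct (Nat.le_gt_cases (a + 1 + (length t0 + 1)) K) as [Hle|Hgt].
    { left; split; [do 3 right; exists a, (t0 ++ [d]); rewrite length_app; auto
                   | apply not_sum_of_length_prod]. }
    destruct (chain_visits_y K (twos a ++ d1 :: t0)) as [i [Hi Hy]].
    { rewrite length_app, twos_length; simpl; lia. }
    { intro Heq; symmetry in Heq; now apply twos_neq_twos_d1 in Heq. }
    do 3 right; exists i, d. simpl. rewrite Hy; simpl.
    rewrite decr_twos_d1, <- !app_assoc; auto.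
Qed.

Lemma completed_of_levels_done n K E : levels_done n K E -> K <= n + 1 ->
  same_system E (completed n K).
Proof.
  intros Hd; induction Hd as [|K E m E' _ IH Hst Hnp]; intros HK.
  - apply sigma_completed.
  - destruct (steps_partial n K E m E' ltac:(lia) (IH ltac:(lia)) Hst) as [Hm HE'].
    pose proof (no_peak_partial n K m E' ltac:(lia) Hm HE' Hnp); subst m.
    intro e; rewrite (HE' e); split;
      [apply partial_end_in_completed | apply completed_in_partial_end]; lia.
Qed.

Theorem lemma6 (n k : nat) :
  1 <= k < n + 3 ->
  forall E, levels_done n (k - 1) E ->
  forall m E', steps k E m E' ->
    m <= 2 ^ k - 1 /\ (no_peak k E' -> m = 2 ^ k - 1).
Proof.
  intros Hk E Hd m E' Hst.
  destruct k as [|K]; [lia|]. rewrite Nat.sub_succ, Nat.sub_0_r in Hd.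
  assert (HE : same_system E (completed n K)) by (apply (completed_of_levels_done n K E Hd); lia).
  destruct (steps_partial n K E m E' ltac:(lia) HE Hst) as [Hm HE'].
  split; [exact Hm|].
  intros Hnp. exact (no_peak_partial n K m E' ltac:(lia) Hm HE' Hnp).
Qed.
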